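(* Let $(X,d)$ be a finite metric space which embeds stochastically into a finite family $\mathcal{Y}=(Y_i,d_i)_{i\in I}$ of metric spaces with distortion $D$, and suppose that for each $i\in I$ the space $Wa(Y_i)$ embeds bi-Lipschitz into $\ell^1$ with distortion $C_i\ge1$. Then $Wa(X)$ embeds bi-Lipschitz into $\ell^1$ with distortion at most $CD$, where $C=\max_{i\in I}C_i$.
   Context: For a metric space $(Y,d)$, $Wa(Y)$ is the set of Borel probability measures on $Y$ with finite first moment, with the Wasserstein distance $Wa(\mu,\nu)=\inf_\pi\int d(x,y)\,d\pi(x,y)$ over couplings $\pi$ (probability measures on $Y\times Y$ with marginals $\mu,\nu$). A metric space $(X,d)$ embeds stochastically with distortion $D\ge1$ into a finite family $(Y_i,d_i)_{i\in I}$ if there are $p_i\ge0$ with $\sum_ip_i=1$ and maps $f_i:X\to Y_i$ that are non-contracting ($d_i(f_i(x),f_i(y))\ge d(x,y)$) with $\sum_ip_id_i(f_i(x),f_i(y))\le D\,d(x,y)$ for all $x,y$. A map $f$ from a metric space $(Z,d)$ into a normed space is a bi-Lipschitz embedding with distortion at most $C$ if there is $s>0$ with $s\,d(x,y)\le\|f(x)-f(y)\|\le Cs\,d(x,y)$ for all $x,y\in Z$. *)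

From HB Require Import structures.
From mathcomp Require Import all_boot all_order all_algebra.
From mathcomp Require Import all_classical all_reals all_analysis.
Set Implicit Arguments.
Unset Strict Implicit.
Unset Printing Implicit Defensive.
Import Order.TTheory GRing.Theory Num.Theory.
Local Open Scope classical_set_scope.
Local Open Scope ring_scope.

Section Defs.
Variable R : realType.

Definition is_metric (Y : Type) (d : Y -> Y -> R) : Prop :=
  (forall x y, 0 <= d x y) /\ (forall x y, d x y = 0 <-> x = y) /\
  (forall x y, d x y = d y x) /\ (forall x y z, d x z <= d x y + d y z).

Definition metric_open (Y : Type) (d : Y -> Y -> R) : set (set Y) :=
  [set A | forall x, A x -> exists2 e : R, 0 < e & forall y, d x y < e -> A y].

Definition metric_open2 (Y : Type) (d : Y -> Y -> R) : set (set (Y * Y)) :=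
  [set A | forall z, A z -> exists2 e : R, 0 < e &
     forall w, d z.1 w.1 < e -> d z.2 w.2 < e -> A w].

Definition borelT (Y : pointedType) (d : Y -> Y -> R) :=
  g_sigma_algebraType (metric_open d).
Definition borelT2 (Y : pointedType) (d : Y -> Y -> R) :=
  g_sigma_algebraType (metric_open2 d).

Definition Wa_set (Y : pointedType) (d : Y -> Y -> R) :
    set (probability (borelT d) R) :=
  [set mu : probability (borelT d) R | exists x0 : Y, (\int[mu]_y (d x0 y)%:E < +oo)%E].

Definition coupling (Y : pointedType) (d : Y -> Y -> R)
    (mu nu : probability (borelT d) R) : set (probability (borelT2 d) R) :=
  [set pi : probability (borelT2 d) R | forall A : set Y, measurable (A : set (borelT d)) ->
     pi (fst @^-1` A) = mu A /\ pi (snd @^-1` A) = nu A].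

Definition Wa_dist (Y : pointedType) (d : Y -> Y -> R)
    (mu nu : probability (borelT d) R) : \bar R :=
  ereal_inf [set (\int[pi]_z (d z.1 z.2)%:E)%E | pi in coupling mu nu].

Definition l1norm (u : nat -> R) : \bar R := (\sum_(0 <= n <oo) `|u n|%:E)%E.

Definition embeds_l1 (Z : Type) (S : set Z) (dz : Z -> Z -> \bar R) (C : R) :=
  exists f : Z -> nat -> R,
    (forall z, S z -> (l1norm (f z) < +oo)%E) /\
    exists2 s : R, 0 < s & forall x y, S x -> S y ->
      (s%:E * dz x y <= l1norm (fun n => f x n - f y n)%R /\
       l1norm (fun n => f x n - f y n)%R <= (C * s)%:E * dz x y)%E.

Definition stoch_embed (X : Type) (dX : X -> X -> R) (I : finType)
    (Y : I -> Type) (dY : forall i, Y i -> Y i -> R) (D : R) :=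
  1 <= D /\
  exists (p : I -> R) (f : forall i, X -> Y i),
    [/\ (forall i, 0 <= p i), \sum_(i : I) p i = 1,
        (forall i x y, dX x y <= dY i (f i x) (f i y)) &
        (forall x y, \sum_(i : I) p i * dY i (f i x) (f i y) <= D * dX x y)].

End Defs.
Arguments Wa_set {R Y} d.
Arguments Wa_dist {R Y} d.
Arguments coupling {R Y} d.

From HB Require Import structures.
From mathcomp Require Import all_boot all_order all_algebra.
From mathcomp Require Import all_classical all_reals all_analysis.
From mathcomp Require Import measurable_realfun lra.
Import Order.TTheory GRing.Theory Num.Theory.
Local Open Scope classical_set_scope.
Local Open Scope ring_scope.

(* Let (p_i, f_i) be the stochastic embedding and G_i an embedding of Wa(Y_i)
   into l^1, rescaled to scale 1.  The embedding of Wa(X) interleaves the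
   sequences p_i G_i(f_i# mu).  Pushing couplings forward along f_i x f_i gives
   sum_i p_i W_i(f_i# mu, f_i# nu) <= D W(mu, nu); pulling couplings back along
   a left inverse of the injective, non-contracting f_i gives
   W(mu, nu) <= W_i(f_i# mu, f_i# nu).  Hence
   W <= sum_i p_i W_i <= |F mu - F nu|_1 <= (max_i C_i) sum_i p_i W_i
     <= (max_i C_i) D W.
   As X is finite, every map defined on X or X x X is Borel measurable. *)

Lemma measurable_EFin_superlevel (R : realType) d (T : measurableType d)
    (h : T -> R) :
  (forall r : R, measurable [set t | r < h t]) ->
  measurable_fun [set: T] (fun t => (h t)%:E).
Proof.
move=> hm; apply/measurable_EFinP.
apply: (@measurability _ _ T R _ h (@RGenOInfty.G R)).
  exact: RGenOInfty.measurableE.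
move=> _ [_ [r ->] <-]; rewrite setTI.
suff -> : h @^-1` `]r, +oo[ = [set t | r < h t] by exact: hm.
by apply/seteqP; split => t /=; rewrite in_itv /= andbT.
Qed.

Section borel_metric.
Context {R : realType} {Y : pointedType} {d : Y -> Y -> R}.
Hypothesis d_metric : is_metric d.

Lemma metric_open_measurable (A : set Y) :
  metric_open d A -> measurable (A : set (borelT d)).
Proof. exact: sub_sigma_algebra. Qed.

Lemma metric_open2_measurable (A : set (Y * Y)) :
  metric_open2 d A -> measurable (A : set (borelT2 d)).
Proof. exact: sub_sigma_algebra. Qed.

Lemma measurable_dist : measurable_fun [set: borelT2 d] (fun z => (d z.1 z.2)%:E).
Proof.
have [_ [_ [dC dT]]] := d_metric.
apply: measurable_EFin_superlevel => r; apply: metric_open2_measurable.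
move=> z /= rz; exists ((d z.1 z.2 - r) / 2); first by rewrite divr_gt0 ?subr_gt0.
move=> w h1 h2 /=; have := dT z.1 w.1 z.2; have := dT w.1 w.2 z.2.
rewrite (dC w.2 z.2); lra.
Qed.

Lemma measurable_dist_from (y0 : Y) :
  measurable_fun [set: borelT d] (fun y => (d y0 y)%:E).
Proof.
have [_ [_ [dC dT]]] := d_metric.
apply: measurable_EFin_superlevel => r; apply: metric_open_measurable.
move=> y /= ry; exists (d y0 y - r); first by rewrite subr_gt0.
by move=> w hw /=; have := dT y0 w y; rewrite (dC w y); lra.
Qed.

Lemma metric_open_setC1 (y : Y) : metric_open d (~` [set y]).
Proof.
have [d0 [dE _]] := d_metric.
move=> z zy; exists (d z y).
  by rewrite lt_neqAle d0 andbT; apply/eqP => /esym /dE.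
by move=> w + wy; rewrite wy ltxx.
Qed.

Lemma borel_measurable_set1 (y : Y) : measurable ([set y] : set (borelT d)).
Proof.
rewrite -[X in measurable X]setCK; apply: measurableC.
exact: metric_open_measurable (metric_open_setC1 y).
Qed.

Lemma measurable_fst_borel :
  measurable_fun [set: borelT2 d] (fst : borelT2 d -> borelT d).
Proof.
apply: (@measurability _ _ _ (borelT d) setT _ (metric_open d)) => // _ [A oA <-].
rewrite setTI.
apply: metric_open2_measurable => z Az; have [e e0 he] := oA _ Az.
by exists e => // w h1 _; exact: he.
Qed.

Lemma measurable_snd_borel :
  measurable_fun [set: borelT2 d] (snd : borelT2 d -> borelT d).
Proof.
apply: (@measurability _ _ _ (borelT d) setT _ (metric_open d)) => // _ [A oA <-].
rewrite setTI.
apply: metric_open2_measurable => z Az; have [e e0 he] := oA _ Az.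
by exists e => // w _ h2; exact: he.
Qed.

Lemma measurable_fst_preimage (A : set Y) :
  measurable (A : set (borelT d)) -> measurable (fst @^-1` A : set (borelT2 d)).
Proof. by move=> mA; rewrite -[X in measurable X]setTI; exact: measurable_fst_borel. Qed.

Lemma measurable_snd_preimage (A : set Y) :
  measurable (A : set (borelT d)) -> measurable (snd @^-1` A : set (borelT2 d)).
Proof. by move=> mA; rewrite -[X in measurable X]setTI; exact: measurable_snd_borel. Qed.

End borel_metric.

Section finite_borel.
Context {R : realType} {X : pointedType} {dX : X -> X -> R}.
Hypotheses (dX_metric : is_metric dX) (X_finite : finite_set [set: X]).

Lemma finite_borel_measurable (A : set X) : measurable (A : set (borelT dX)).
Proof.
have -> : A = \bigcup_(x in A) [set x].
  by apply/seteqP; split => [x Ax | _ [x Ax ->]] //; exists x.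
apply: fin_bigcup_measurable; first exact: sub_finite_set X_finite.
by move=> x _; exact: borel_measurable_set1.
Qed.

Lemma finite_borel2_measurable (A : set (X * X)) : measurable (A : set (borelT2 dX)).
Proof.
have -> : A = \bigcup_(z in A) (fst @^-1` [set z.1] `&` snd @^-1` [set z.2]).
  apply/seteqP; split => [z Az | [a b] [[x y] Axy [/= -> ->]]] //; by exists z.
apply: fin_bigcup_measurable => [|z _].
  by apply: sub_finite_set (finite_setX X_finite X_finite) => z _.
apply: measurableI.
  exact: measurable_fst_preimage (borel_measurable_set1 dX_metric _).
exact: measurable_snd_preimage (borel_measurable_set1 dX_metric _).
Qed.

Lemma finite_borel_measurable_fun d (T : measurableType d) (h : borelT dX -> T) D :
  measurable_fun D h.
Proof. by move=> _ B _; exact: finite_borel_measurable. Qed.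

Lemma finite_borel2_measurable_fun d (T : measurableType d) (h : borelT2 dX -> T) D :
  measurable_fun D h.
Proof. by move=> _ B _; exact: finite_borel2_measurable. Qed.

End finite_borel.

Definition pushforward_probability {d d'} {T : measurableType d}
    {T' : measurableType d'} {R : realType} (P : probability T R) {f : T -> T'}
    (mf : measurable_fun [set: T] f) : probability T' R :=
  distribution P (mfun_Sub (mem_set mf : f \in mfun)).

Lemma Wa_dist_ge0 {R : realType} {Y : pointedType} (d : Y -> Y -> R) mu nu :
  is_metric d -> (0 <= Wa_dist d mu nu)%E.
Proof.
case=> d0 _; apply: le_ereal_inf_tmp => _ [pi _ <-].
by apply: integral_ge0 => z _; rewrite lee_fin.
Qed.

Lemma finite_set_ub {R : realDomainType} {T : choiceType} {A : set T} (h : T -> R) :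
  finite_set A -> exists M, forall x, A x -> h x <= M.
Proof.
move=> /finite_fsetP[F ->]; exists (\big[Num.max/0]_(y <- finmap.enum_fset F) h y).
by move=> x Fx; exact: le_bigmax_seq.
Qed.

Lemma noncontracting_inj {R : realType} {X Y : Type} {dX : X -> X -> R}
    {dY : Y -> Y -> R} {f : X -> Y} :
  is_metric dX -> is_metric dY -> (forall x y, dX x y <= dY (f x) (f y)) ->
  injective f.
Proof.
move=> [dX0 [dXE _]] [_ [dYE _]] hf x y fxy; apply/dXE/eqP.
by rewrite eq_le dX0 andbT -((proj2 (dYE _ _)) fxy); exact: hf.
Qed.

Section noncontracting_pushforward.
Context {R : realType} {X Y : pointedType} {dX : X -> X -> R} {dY : Y -> Y -> R}.
Hypotheses (dX_metric : is_metric dX) (dY_metric : is_metric dY).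
Hypothesis X_finite : finite_set [set: X].
Variable f : X -> Y.
Hypothesis f_noncontracting : forall x y, dX x y <= dY (f x) (f y).
Hypothesis mf : measurable_fun [set: borelT dX] (f : borelT dX -> borelT dY).

Let push (mu : probability (borelT dX) R) := pushforward_probability mu mf.

Let ff (z : borelT2 dX) : borelT2 dY := (f z.1, f z.2).

Let mff : measurable_fun [set: borelT2 dX] ff.
Proof. exact: finite_borel2_measurable_fun. Qed.

Lemma Wa_dist_pushforward_le_integral mu nu pi : coupling dX mu nu pi ->
  (Wa_dist dY (push mu) (push nu) <= \int[pi]_z (dY (f z.1) (f z.2))%:E)%E.
Proof.
move=> pi_mu_nu; have [dY0 _] := dY_metric.
apply: le_trans (ereal_inf_lbound _) _.
  exists (pushforward_probability pi mff) => // B mB.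
  exact: pi_mu_nu (f @^-1` B) (finite_borel_measurable dX_metric X_finite _).
have dY_ge0 : {in [set: borelT2 dY], forall z, (0 <= (dY z.1 z.2)%:E)%E}.
  by move=> z _; rewrite lee_fin.
have := ge0_integral_pushforward mff pi measurableT (measurable_dist dY_metric) dY_ge0.
by rewrite preimage_setT => <-.
Qed.

Lemma Wa_set_pushforward mu : Wa_set dY (push mu).
Proof.
have [dY0 _] := dY_metric; exists (f point).
have dY_ge0 : {in [set: borelT dY], forall y, (0 <= (dY (f point) y)%:E)%E}.
  by move=> y _; rewrite lee_fin.
have := ge0_integral_pushforward mf mu measurableT
  (measurable_dist_from dY_metric (f point)) dY_ge0.
rewrite preimage_setT => ->.
have [M hM] := finite_set_ub (fun x => dY (f point) (f x)) X_finite.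
apply: (@le_lt_trans _ _ (\int[mu]_x (cst M%:E) x)%E); last first.
  rewrite integral_cst //.
  have -> : (M%:E * mu setT = M%:E)%E by rewrite probability_setT mule1.
  exact: ltry.
apply: ge0_le_integral => [//|x _||//|x _].
- by rewrite lee_fin.
- exact: finite_borel_measurable_fun.
- by rewrite lee_fin; exact: hM.
Qed.

(* A left inverse of f; its value off range f is irrelevant, since couplings of
   pushforwards by f live on range f x range f. *)
Let g (y : Y) : X := xget point (f @^-1` [set y]).

Let gK : cancel f g.
Proof.
move=> x; apply: xget_unique => // x' /=.
exact: (noncontracting_inj dX_metric dY_metric f_noncontracting).
Qed.

Let g_out y : ~ range f y -> g y = point.
Proof. by move=> yf; apply: xgetPN => x /= fxy; apply: yf; exists x. Qed.

Let measurable_range_setC : measurable (~` range f : set (borelT dY)).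
Proof.
have -> : ~` range f = \bigcap_(x in [set: X]) ~` [set f x].
  apply/seteqP; split => [y yf x _ /= yfx | y hy [x _ fxy]].
    by apply: yf; exists x.
  exact: hy x I (esym fxy).
apply: fin_bigcap_measurable => // x _.
exact: metric_open_measurable (metric_open_setC1 dY_metric (f x)).
Qed.

Let measurable_g : measurable_fun [set: borelT dY] (g : borelT dY -> borelT dX).
Proof.
move=> _ B _; rewrite setTI.
have -> : g @^-1` B = f @` B `|` (~` range f `&` [set _ | B point]).
  apply/seteqP; split => y /=.
    have [[x _ <-]|yf] := pselect (range f y); first by rewrite gK; left; exists x.
    by rewrite g_out //; right.
  by case=> [[x Bx <-]|[yf Bp]]; rewrite ?gK ?g_out.
apply: measurableU.
  rewrite -(bigcup_imset1 B f).
  apply: fin_bigcup_measurable; first exact: sub_finite_set X_finite.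
  by move=> x _; exact: borel_measurable_set1.
apply: measurableI; first exact: measurable_range_setC.
have [Bp|nBp] := pselect (B point).
  by have -> : [set _ | B point] = [set: Y] by apply/seteqP; split.
by have -> : [set _ | B point] = set0 :> set Y by apply/seteqP; split.
Qed.

Let measurable_g_preimage (A : set X) : measurable (g @^-1` A : set (borelT dY)).
Proof.
rewrite -[X in measurable X]setTI.
exact: measurable_g measurableT _ (finite_borel_measurable dX_metric X_finite A).
Qed.

Let gg (z : borelT2 dY) : borelT2 dX := (g z.1, g z.2).

Let measurable_gg : measurable_fun [set: borelT2 dY] gg.
Proof.
move=> _ A _; rewrite setTI.
have -> : gg @^-1` A = \bigcup_(a in [set: X])
    (fst @^-1` (g @^-1` [set a]) `&` snd @^-1` (g @^-1` [set b | A (a, b)])).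
  apply/seteqP; split => [z Az | z [a _ [/= <- //]]].
  by exists (g z.1).
apply: fin_bigcup_measurable => // a _; apply: measurableI.
  exact: measurable_fst_preimage (measurable_g_preimage _).
exact: measurable_snd_preimage (measurable_g_preimage _).
Qed.

Let pullback_coupling {mu nu pi} : coupling dY (push mu) (push nu) pi ->
  coupling dX mu nu (pushforward_probability pi measurable_gg).
Proof.
move=> pi_coupling A _.
have fgA : f @^-1` (g @^-1` A) = A by apply/seteqP; split => x /=; rewrite gK.
have pi1 : pi (fst @^-1` (g @^-1` A)) = mu (f @^-1` (g @^-1` A)).
  exact: (pi_coupling _ (measurable_g_preimage A)).1.
have pi2 : pi (snd @^-1` (g @^-1` A)) = nu (f @^-1` (g @^-1` A)).
  exact: (pi_coupling _ (measurable_g_preimage A)).2.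
by rewrite fgA in pi1 pi2; split; [exact: pi1 | exact: pi2].
Qed.

Let coupling_outside_range_negligible {mu nu pi} :
  coupling dY (push mu) (push nu) pi ->
  pi.-negligible (fst @^-1` (~` range f) `|` snd @^-1` (~` range f)).
Proof.
move=> pi_coupling.
have f_range_setC : f @^-1` (~` range f) = set0.
  by apply/seteqP; split => x //= []; exists x.
have [pi1 pi2] := pi_coupling _ measurable_range_setC.
apply: negligibleU.
  exists (fst @^-1` (~` range f)); split => //.
    exact: measurable_fst_preimage measurable_range_setC.
  by rewrite -(measure0 mu) -f_range_setC; exact: pi1.
exists (snd @^-1` (~` range f)); split => //.
  exact: measurable_snd_preimage measurable_range_setC.
by rewrite -(measure0 nu) -f_range_setC; exact: pi2.
Qed.

Lemma Wa_dist_le_pushforward mu nu :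
  (Wa_dist dX mu nu <= Wa_dist dY (push mu) (push nu))%E.
Proof.
have [dX0 _] := dX_metric; have [dY0 _] := dY_metric.
apply: le_ereal_inf_tmp => _ [pi pi_coupling <-].
apply: le_trans (ereal_inf_lbound _) _.
  by exists (pushforward_probability pi measurable_gg) => //; exact: pullback_coupling.
have mdX := measurable_dist dX_metric.
have dX_ge0 : {in [set: borelT2 dX], forall z, (0 <= (dX z.1 z.2)%:E)%E}.
  by move=> z _; rewrite lee_fin.
have := ge0_integral_pushforward measurable_gg pi measurableT mdX dX_ge0.
rewrite preimage_setT => ->.
apply: ae_ge0_le_integral => //.
- by move=> z _; rewrite lee_fin.
- exact: measurableT_comp mdX measurable_gg.
- by move=> z _; rewrite lee_fin.
- exact: measurable_dist dY_metric.
have [N [mN N0 sN]] := coupling_outside_range_negligible pi_coupling.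
exists N; split => // z nPz; apply: sN; move: nPz.
apply: contra_notP => /not_orP[/contrapT[a _ fa] /contrapT[b _ fb]] _.
by rewrite /gg /= -fa -fb !gK lee_fin; exact: f_noncontracting.
Qed.

End noncontracting_pushforward.

Section l1.
Context {R : realType}.

Definition l1dist (u v : nat -> R) : \bar R := l1norm (fun n => u n - v n).

Lemma l1normZ (c : R) (u : nat -> R) : 0 <= c ->
  l1norm (fun n => c * u n) = (c%:E * l1norm u)%E.
Proof.
move=> c0; rewrite /l1norm -nneseriesZl //.
by apply: eq_eseriesr => n _; rewrite normrM ger0_norm.
Qed.

Lemma l1distZ (c : R) (u v : nat -> R) : 0 <= c ->
  l1dist (fun n => c * u n) (fun n => c * v n) = (c%:E * l1dist u v)%E.
Proof.
move=> c0; rewrite /l1dist -l1normZ //.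
by congr l1norm; apply/funext => n; rewrite mulrBr.
Qed.

Lemma nneseries_mod_div (k r : nat) (c : nat -> \bar R) :
  (r < k)%N -> (forall m, 0 <= c m)%E ->
  (\sum_(n <oo) (if r == (n %% k)%N then c (n %/ k)%N else 0) =
   \sum_(m <oo) c m)%E.
Proof.
move=> rk c0; have k_gt0 : (0 < k)%N by apply: leq_ltn_trans rk.
rewrite !nneseries_esumT //; last by move=> n; case: ifP.
have -> : (\esum_(n in [set: nat]) (if r == (n %% k)%N then c (n %/ k)%N else 0)) =
    \esum_(n in [set n | r = (n %% k)%N]) c (n %/ k)%N.
  rewrite [RHS]esum_mkcond; apply: eq_esum => n _.
  by case: eqP => h; [rewrite mem_set | rewrite memNset].
have -> : [set n | r = (n %% k)%N] = (fun m => m * k + r)%N @` [set: nat].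
  apply/seteqP; split => [n /= rn | _ [m _ <-] /=].
    by exists (n %/ k)%N => //; rewrite rn -divn_eq.
  by rewrite modnMDl modn_small.
rewrite esum_image; last first.
  by move=> m1 m2 _ _ /= /addIn /eqP; rewrite eqn_pmul2r // => /eqP.
by apply: eq_esum => m _; rewrite divnMDl // divn_small // addn0.
Qed.

Section interleave.
Context {I : finType}.

(* The l^1-direct sum of the b i, laid out as a single sequence. *)
Definition interleave (b : I -> nat -> R) (n : nat) : R :=
  \sum_(i : I) if enum_rank i == (n %% #|I|)%N :> nat then b i (n %/ #|I|)%N else 0.

Lemma interleaveB (a b : I -> nat -> R) (n : nat) :
  interleave a n - interleave b n = interleave (fun i m => a i m - b i m) n.
Proof. by rewrite -sumrB; apply: eq_bigr => i _; case: ifP; rewrite ?subr0. Qed.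

Lemma normr_interleave (b : I -> nat -> R) (n : nat) :
  `|interleave b n| = interleave (fun i m => `|b i m|) n.
Proof.
rewrite /interleave.
case: (pickP (fun i : I => enum_rank i == (n %% #|I|)%N :> nat)) => [i /eqP ri | none].
  have other j : j != i -> (enum_rank j == (n %% #|I|)%N :> nat) = false.
    move=> ji; apply/negbTE; rewrite -ri; apply: contra ji => /eqP/val_inj.
    by move/enum_rank_inj => ->.
  by rewrite (bigD1 i) // [RHS](bigD1 i) //= ri eqxx !big1 ?addr0 // => j /other ->.
by rewrite !big1 ?normr0 // => i _; rewrite none.
Qed.

Lemma l1norm_interleave (b : I -> nat -> R) :
  l1norm (interleave b) = (\sum_(i : I) l1norm (b i))%E.
Proof.
have normE n : (`|interleave b n|%:E = \sum_(i : I)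
    if enum_rank i == (n %% #|I|)%N :> nat then `|b i (n %/ #|I|)%N|%:E else 0)%E.
  by rewrite normr_interleave -sumEFin; apply: eq_bigr => i _; case: ifP.
rewrite /l1norm (eq_eseriesr (fun n _ => normE n)) nneseries_sum.
  by apply: eq_bigr => i _; apply: nneseries_mod_div.
by move=> i n _; case: ifP.
Qed.

Lemma l1dist_interleave (a b : I -> nat -> R) :
  l1dist (interleave a) (interleave b) = (\sum_(i : I) l1dist (a i) (b i))%E.
Proof.
rewrite /l1dist (_ : (fun n => _) = interleave (fun i m => a i m - b i m)).
  exact: l1norm_interleave.
by apply/funext => n; rewrite interleaveB.
Qed.

End interleave.
End l1.

Section embeds_l1.
Context {R : realType} {Z : Type}.

Lemma embeds_l1_comp {T : Type} {S : set Z} {ST : set T} {dT : T -> T -> \bar R}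
    {C : R} (h : Z -> T) :
  embeds_l1 ST dT C -> (forall z, S z -> ST (h z)) ->
  embeds_l1 S (fun x y => dT (h x) (h y)) C.
Proof.
move=> [F [F_fin [s s_gt0 F_bilip]]] hS.
exists (F \o h); split=> [z /hS/F_fin //|].
by exists s => // x y /hS Sx /hS Sy; exact: F_bilip.
Qed.

Lemma embeds_l1_unit_scale {S : set Z} {d : Z -> Z -> \bar R} {C : R} :
  embeds_l1 S d C -> exists G : Z -> nat -> R,
    (forall z, S z -> l1norm (G z) < +oo)%E /\
    forall x y, S x -> S y ->
      (d x y <= l1dist (G x) (G y) /\ l1dist (G x) (G y) <= C%:E * d x y)%E.
Proof.
move=> [F [F_fin [s s_gt0 F_bilip]]].
have s_neq0 : s != 0 by rewrite gt_eqF.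
have s_inv_ge0 : 0 <= s^-1 by rewrite invr_ge0 ltW.
exists (fun z n => s^-1 * F z n); split => [z Sz | x y Sx Sy].
  by rewrite l1normZ // lte_mul_pinfty // ?F_fin.
have [lower upper] := F_bilip x y Sx Sy; rewrite l1distZ //; split.
  rewrite -[d x y]mul1e -(mulVf s_neq0) EFinM -muleA.
  exact: lee_wpmul2l.
apply: le_trans (lee_wpmul2l _ upper) _; first by rewrite lee_fin.
by rewrite muleA -EFinM mulrCA mulVf // mulr1.
Qed.

Lemma embeds_l1_average {I : finType} (S : set Z) (dZ : Z -> Z -> \bar R)
    (W : I -> Z -> Z -> \bar R) (p C : I -> R) (D : R) :
  (forall i, 0 <= p i) -> (forall i x y, 0 <= W i x y)%E ->
  (forall x y, S x -> S y -> dZ x y <= \sum_(i : I) (p i)%:E * W i x y)%E ->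
  (forall x y, S x -> S y -> \sum_(i : I) (p i)%:E * W i x y <= D%:E * dZ x y)%E ->
  (forall i, embeds_l1 S (W i) (C i)) ->
  embeds_l1 S dZ ((\big[Num.max/1]_(i : I) C i) * D).
Proof.
move=> p_ge0 W_ge0 lower upper emb.
have /choice[G G_spec] := fun i => embeds_l1_unit_scale (emb i).
pose F z := interleave (fun i n => p i * G i z n).
have l1dist_F x y : l1dist (F x) (F y) =
    (\sum_(i : I) (p i)%:E * l1dist (G i x) (G i y))%E.
  by rewrite l1dist_interleave; apply: eq_bigr => i _; exact: l1distZ.
set Cm := \big[Num.max/1]_(i : I) C i.
have Cm_ge1 : 1 <= Cm := bigmax_ge_id _ _ _ _.
exists F; split => [z Sz | ].
  rewrite l1norm_interleave; apply: lte_sum_pinfty => i _.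
  by rewrite l1normZ // lte_mul_pinfty // ?lee_fin ?(G_spec i).1.
exists 1 => // x y Sx Sy; rewrite mul1e mulr1 [l1norm _]l1dist_F; split.
  apply: le_trans (lower x y Sx Sy) _; apply: lee_sum => i _.
  by apply: lee_wpmul2l; [rewrite lee_fin | exact: ((G_spec i).2 x y Sx Sy).1].
apply: (@le_trans _ _ (Cm%:E * \sum_(i : I) (p i)%:E * W i x y)%E); last first.
  rewrite EFinM -muleA; apply: lee_wpmul2l; last exact: upper.
  by rewrite lee_fin (le_trans _ Cm_ge1).
rewrite ge0_sume_distrr => [|i _]; last by rewrite mule_ge0 ?lee_fin.
apply: lee_sum => i _; rewrite muleCA; apply: lee_wpmul2l; first by rewrite lee_fin.
apply: le_trans ((G_spec i).2 x y Sx Sy).2 _.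
by apply: lee_wpmul2r; [exact: W_ge0 | rewrite lee_fin le_bigmax].
Qed.

End embeds_l1.

Section stochastic_Wa_dist.
Context {R : realType} {X : pointedType} {dX : X -> X -> R}.
Context {I : finType} {Y : I -> pointedType} {dY : forall i, Y i -> Y i -> R}.
Hypotheses (dX_metric : is_metric dX) (dY_metric : forall i, is_metric (dY i)).
Hypothesis X_finite : finite_set [set: X].
Variables (p : I -> R) (f : forall i, X -> Y i).
Hypothesis p_ge0 : forall i, 0 <= p i.
Hypothesis f_noncontracting : forall i x y, dX x y <= dY i (f i x) (f i y).
Hypothesis mf :
  forall i, measurable_fun [set: borelT dX] (f i : borelT dX -> borelT (dY i)).

Let W i (mu nu : probability (borelT dX) R) :=
  Wa_dist (dY i) (pushforward_probability mu (mf i)) (pushforward_probability nu (mf i)).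

Lemma Wa_dist_le_average mu nu : \sum_(i : I) p i = 1 ->
  (Wa_dist dX mu nu <= \sum_(i : I) (p i)%:E * W i mu nu)%E.
Proof.
move=> p_sum1.
rewrite -[Wa_dist dX mu nu]mul1e -p_sum1 -sumEFin ge0_sume_distrl; last first.
  by move=> i _; rewrite lee_fin.
apply: lee_sum => i _; apply: lee_wpmul2l; first by rewrite lee_fin.
exact: Wa_dist_le_pushforward.
Qed.

Lemma Wa_dist_average_le_integral {mu nu pi} : coupling dX mu nu pi ->
  (\sum_(i : I) (p i)%:E * W i mu nu <=
   \int[pi]_z (\sum_(i : I) p i * dY i (f i z.1) (f i z.2))%:E)%E.
Proof.
move=> pi_coupling.
have dY_ge0 i z : (0 <= (p i * dY i (f i z.1) (f i z.2))%:E)%E.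
  by have [d0 _] := dY_metric i; rewrite lee_fin mulr_ge0.
rewrite (eq_integral (fun z : borelT2 dX =>
    \sum_(i : I) (p i * dY i (f i z.1) (f i z.2))%:E)%E); last first.
  by move=> z _; rewrite sumEFin.
rewrite ge0_integral_sum //; last first.
  by move=> i; exact: finite_borel2_measurable_fun.
apply: lee_sum => i _.
rewrite (eq_integral (fun z : borelT2 dX =>
    (p i)%:E * (dY i (f i z.1) (f i z.2))%:E)%E); last first.
  by move=> z _; rewrite EFinM.
rewrite ge0_integralZl //.
- apply: lee_wpmul2l; first by rewrite lee_fin.
  exact: Wa_dist_pushforward_le_integral.
- exact: finite_borel2_measurable_fun.
- by move=> z _; have [d0 _] := dY_metric i; rewrite lee_fin.
- by rewrite lee_fin.
Qed.

Lemma Wa_dist_average_le (D : R) mu nu : 0 < D ->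
  (forall x y, \sum_(i : I) p i * dY i (f i x) (f i y) <= D * dX x y) ->
  (\sum_(i : I) (p i)%:E * W i mu nu <= D%:E * Wa_dist dX mu nu)%E.
Proof.
move=> D_gt0 f_avg; have [dX0 _] := dX_metric.
rewrite [in leRHS]/Wa_dist -ereal_inf_pZl //.
apply: le_ereal_inf_tmp => _ [_ [pi pi_coupling <-] <-].
apply: le_trans (Wa_dist_average_le_integral pi_coupling) _.
rewrite -ge0_integralZl //; first last.
- by rewrite lee_fin ltW.
- by move=> z _; rewrite lee_fin.
- exact: measurable_dist dX_metric.
apply: ge0_le_integral => //.
- move=> z _; rewrite lee_fin sumr_ge0 // => i _.
  by have [d0 _] := dY_metric i; rewrite mulr_ge0.
- exact: finite_borel2_measurable_fun.
- exact: finite_borel2_measurable_fun.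
- by move=> z _; rewrite -EFinM lee_fin; exact: f_avg.
Qed.

End stochastic_Wa_dist.

Theorem corollary3 (R : realType) (X : pointedType) (dX : X -> X -> R)
  (I : finType) (Y : I -> pointedType) (dY : forall i, Y i -> Y i -> R)
  (D : R) (C : I -> R) :
  finite_set [set: X] ->
  is_metric dX -> (forall i, is_metric (dY i)) ->
  stoch_embed dX dY D ->
  (forall i, 1 <= C i) ->
  (forall i, embeds_l1 (Wa_set (dY i)) (Wa_dist (dY i)) (C i)) ->
  embeds_l1 (Wa_set dX) (Wa_dist dX) ((\big[Num.max/1]_(i : I) C i) * D).
Proof.
move=> X_finite dX_metric dY_metric.
move=> [D_ge1 [p [f [p_ge0 p_sum1 f_noncontracting f_avg]]]] _ emb.
have mf i : measurable_fun [set: borelT dX] (f i : borelT dX -> borelT (dY i)).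
  exact: finite_borel_measurable_fun.
pose W i mu nu :=
  Wa_dist (dY i) (pushforward_probability mu (mf i)) (pushforward_probability nu (mf i)).
apply: (@embeds_l1_average _ _ _ _ _ W p) => //.
- by move=> i mu nu; exact: Wa_dist_ge0.
- by move=> mu nu _ _; exact: Wa_dist_le_average.
- by move=> mu nu _ _; apply: Wa_dist_average_le => //; exact: lt_le_trans D_ge1.
- move=> i; apply: (embeds_l1_comp (fun mu => pushforward_probability mu (mf i))).
    exact: emb.
  by move=> mu _; exact: Wa_set_pushforward.
Qed.
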